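(* Let $\{X_m\}_{m\ge1}$ and $X$ be real functions on $\Omega$ with $X_m\to X$ q.s., and suppose there is a nonnegative $Y\in\mathbb{L}_b^1$ with $|X_m|\le Y$ for all $m\ge1$. Then $\lim_{m\to\infty}\mathbb{E}[X_m]=\mathbb{E}[X]$.
   Context: $\Omega=\{\omega_i\}_{i\in\mathbb{Z}^+}$ is a countable state space. For each $i$, $\underline f_i,\overline f_i$ are continuous real functions of $(\theta_1,\dots,\theta_{i-1})$ (constants for $i=1$), $\underline f_i$ convex, $\overline f_i$ concave, with $0\le\overline f_i-\underline f_i\le c_i$ where $(c_i)$ is a positive sequence with $\sum_i c_i<\infty$. The domain $\mathcal D=\{(\theta_i)_{i\in\mathbb{Z}^+}: 0\le\theta_i\le1,\ \underline f_i(\theta_1,\dots,\theta_{i-1})\le\theta_i\le\overline f_i(\theta_1,\dots,\theta_{i-1})\ \forall i,\ \sum_i\theta_i=1\}$ is nonempty, convex and compact. $P_\theta(\{\omega_i\})=\theta_i$, $E_\theta[X]=\sum_iX(\omega_i)\theta_i$, and $\mathbb{E}[X]=\sup_{\theta\in\mathcal D}E_\theta[X]$. ''q.s.'' means outside a set $A$ with $\sup_{\theta\in\mathcal D}P_\theta(A)=0$. $\mathbb{L}^1=\{X:\Omega\to\mathbb{R}:\ \mathbb{E}[|X|]<\infty\}$ and $\mathbb{L}_b^1=\{X\in\mathbb{L}^1:\ \lim_{n\to\infty}\mathbb{E}[|X|\mathbf 1_{\{|X|>n\}}]=0\}$. *)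

From Stdlib Require Import Reals.
From Coquelicot Require Import Coquelicot.
Open Scope R_scope.

(* The state space Omega = {omega_i} is indexed by nat (0-based: omega_i <-> i).
   A real function on Omega is a map nat -> R; a probability vector theta is nat -> R.
   flo i, fup i : (nat -> R) -> R are the bounds for theta_i; they are required
   (below, in the theorem) to depend only on theta_0, ..., theta_{i-1}. *)

Definition unit_seq (th : nat -> R) : Prop := forall j, 0 <= th j <= 1.

Definition inD (flo fup : nat -> (nat -> R) -> R) (th : nat -> R) : Prop :=
  (forall i, 0 <= th i <= 1) /\
  (forall i, flo i th <= th i <= fup i th) /\
  infinite_sum th 1.

Definition Etheta (th X : nat -> R) : Rbar :=
  Lim_seq (fun n => sum_f_R0 (fun i => X i * th i) n).

Definition sE (flo fup : nat -> (nat -> R) -> R) (X : nat -> R) : Rbar :=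
  Rbar_lub (fun r => exists th, inD flo fup th /\ r = Etheta th X).

Definition indic (A : nat -> bool) : nat -> R := fun i => if A i then 1 else 0.

(* quasi-sure: P holds outside a set A with sup_theta P_theta(A) = 0 *)
Definition qs (flo fup : nat -> (nat -> R) -> R) (P : nat -> Prop) : Prop :=
  exists A : nat -> bool,
    sE flo fup (indic A) = Finite 0 /\ (forall i, A i = false -> P i).

Definition absf (X : nat -> R) : nat -> R := fun i => Rabs (X i).

Definition L1 (flo fup : nat -> (nat -> R) -> R) (X : nat -> R) : Prop :=
  Rbar_lt (sE flo fup (absf X)) p_infty.

Definition L1b (flo fup : nat -> (nat -> R) -> R) (X : nat -> R) : Prop :=
  L1 flo fup X /\
  let T := fun n : nat => sE flo fup
       (fun i => if Rlt_dec (INR n) (Rabs (X i)) then Rabs (X i) else 0) in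
  (forall n, is_finite (T n)) /\ is_lim_seq (fun n => real (T n)) 0.

Definition depends_on_first (i : nat) (f : (nat -> R) -> R) : Prop :=
  forall th th', (forall j, (j < i)%nat -> th j = th' j) -> f th = f th'.

Definition convex_on_unit (f : (nat -> R) -> R) : Prop :=
  forall th th' t, unit_seq th -> unit_seq th' -> 0 <= t <= 1 ->
    f (fun j => t * th j + (1 - t) * th' j) <= t * f th + (1 - t) * f th'.

Definition concave_on_unit (f : (nat -> R) -> R) : Prop :=
  convex_on_unit (fun th => - f th).

Definition cont_first (i : nat) (f : (nat -> R) -> R) : Prop :=
  forall th, unit_seq th -> forall eps, 0 < eps -> exists delta, 0 < delta /\
    forall th', unit_seq th' -> (forall j, (j < i)%nat -> Rabs (th' j - th j) < delta) ->
      Rabs (f th' - f th) < eps.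

Definition setup (flo fup : nat -> (nat -> R) -> R) (c : nat -> R) : Prop :=
  (forall i, depends_on_first i (flo i) /\ depends_on_first i (fup i)) /\
  (forall i, cont_first i (flo i) /\ cont_first i (fup i)) /\
  (forall i, convex_on_unit (flo i) /\ concave_on_unit (fup i)) /\
  (forall i, 0 < c i) /\ ex_series c /\
  (forall i th, unit_seq th -> 0 <= fup i th - flo i th <= c i) /\
  (exists th, inD flo fup th) /\
  (forall th th' t, inD flo fup th -> inD flo fup th' -> 0 <= t <= 1 ->
     inD flo fup (fun j => t * th j + (1 - t) * th' j)) /\
  (* D compact (product topology on [0,1]^N, metrizable: sequential compactness) *)
  (forall s : nat -> nat -> R, (forall n, inD flo fup (s n)) ->
     exists (phi : nat -> nat) (th : nat -> R),
       (forall n, (phi n < phi (S n))%nat) /\ inD flo fup th /\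
       forall j, is_lim_seq (fun n => s (phi n) j) (th j)).

From Stdlib Require Import Reals Lra Lia Classical ClassicalEpsilon.
From Coquelicot Require Import Coquelicot.
Open Scope R_scope.

(* Every theta in D puts no mass on the q.s. null set, so all theta-expectations
   below are dominated by E_theta|Y| <= E[|Y|]. Sequential compactness makes D
   tight: one finite block {0, ..., K} carries mass >= 1 - eta under every
   theta in D. On that block X_m -> X uniformly; off it
   |X_m - X| <= 2|Y| <= 2N + 2|Y|1{|Y| > N}, whose theta-expectation is at most
   2N eta + 2E[|Y|1{|Y| > N}], which is small because Y is in L^1_b. Hence
   E_theta[X_m] -> E_theta[X] uniformly over D, and the suprema converge. *)

Lemma sum_f_R0_nonneg_le (a : nat -> R) (m n : nat) :
  (forall i, 0 <= a i) -> (m <= n)%nat -> sum_f_R0 a m <= sum_f_R0 a n.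
Proof.
  intros Ha Hmn; induction Hmn as [|n _ IH]; [lra|].
  simpl; specialize (Ha (S n)); lra.
Qed.

Lemma sum_f_R0_le_Lim_seq (a : nat -> R) (n : nat) :
  (forall i, 0 <= a i) -> Rbar_le (sum_f_R0 a n) (Lim_seq (sum_f_R0 a)).
Proof.
  intros Ha; rewrite <- (Lim_seq_const (sum_f_R0 a n)).
  apply Lim_seq_le_loc; exists n; intros k Hk; exact (sum_f_R0_nonneg_le a n k Ha Hk).
Qed.

Lemma Series_nonneg_bounded (a : nat -> R) (B : R) :
  (forall i, 0 <= a i) -> (forall n, sum_f_R0 a n <= B) ->
  ex_series a /\ Series a <= B.
Proof.
  intros Ha HB.
  destruct (ex_finite_lim_seq_incr (sum_f_R0 a) B) as [l Hl]; [|exact HB|].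
  { intros n; simpl; specialize (Ha (S n)); lra. }
  assert (Hs : is_series a l) by apply is_series_Reals, is_lim_seq_Reals, Hl.
  split; [exists l; exact Hs|].
  rewrite (is_series_unique _ _ Hs).
  exact (is_lim_seq_le _ _ _ _ HB Hl (is_lim_seq_const B)).
Qed.

Lemma sum_f_R0_le_Series (a : nat -> R) (n : nat) :
  (forall i, 0 <= a i) -> ex_series a -> sum_f_R0 a n <= Series a.
Proof.
  intros Ha Hex; apply sum_incr; [|exact Ha].
  apply is_series_Reals, Series_correct, Hex.
Qed.

Lemma Etheta_Series th U :
  ex_series (fun i => U i * th i) -> Etheta th U = Series (fun i => U i * th i).
Proof.
  intros Hex; apply is_lim_seq_unique, is_lim_seq_Reals, is_series_Reals, Series_correct, Hex.
Qed.

Lemma Series_dominated (a b : nat -> R) :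
  (forall i, Rabs (a i) <= b i) -> ex_series b ->
  ex_series a /\ Rabs (Series a) <= Series b.
Proof.
  intros Hab Hb.
  assert (Habs : ex_series (fun i => Rabs (a i))).
  { apply (@ex_series_le R_AbsRing R_CompleteNormedModule _ b); [|exact Hb].
    intros i; change (Rabs (Rabs (a i)) <= b i); rewrite Rabs_Rabsolu; apply Hab. }
  split; [exact (ex_series_Rabs _ Habs)|].
  eapply Rle_trans; [exact (Series_Rabs _ Habs)|].
  apply Series_le; [|exact Hb]. intros i; split; [apply Rabs_pos | apply Hab].
Qed.

Lemma Series_dist_le (a b : nat -> R) (eps : R) :
  ex_series a -> ex_series b ->
  (forall n, sum_f_R0 (fun i => Rabs (a i - b i)) n <= eps) ->
  Rabs (Series a - Series b) <= eps.
Proof.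
  intros Ha Hb Hd; rewrite <- Series_minus by assumption.
  destruct (Series_nonneg_bounded _ eps (fun i => Rabs_pos _) Hd) as [Hex Hle].
  eapply Rle_trans; [exact (Series_Rabs _ Hex) | exact Hle].
Qed.

Lemma is_lim_seq_sum_f_R0 (u : nat -> nat -> R) (v : nat -> R) :
  (forall i, is_lim_seq (fun k => u k i) (v i)) ->
  forall n, is_lim_seq (fun k => sum_f_R0 (u k) n) (sum_f_R0 v n).
Proof.
  intros H n; induction n as [|n IH]; [apply H|].
  exact (is_lim_seq_plus' _ _ _ _ IH (H (S n))).
Qed.

Lemma is_lim_seq_uniform_finite (P : nat -> Prop) (u : nat -> nat -> R) (v : nat -> R) :
  (forall i, P i -> is_lim_seq (fun m => u m i) (v i)) ->
  forall e, 0 < e -> forall K, exists M, forall m, (M <= m)%nat ->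
    forall i, (i < K)%nat -> P i -> Rabs (u m i - v i) < e.
Proof.
  intros H e He K; induction K as [|K [M HM]].
  { exists 0%nat; intros; lia. }
  destruct (classic (P K)) as [HK|HK].
  - pose proof (proj2 (is_lim_seq_spec _ _) (H K HK) (mkposreal e He)) as [M' HM'].
    exists (Nat.max M M'); intros m Hm i Hi HPi.
    destruct (Nat.eq_dec i K) as [->|]; [apply HM'; lia | apply HM; [lia|lia|exact HPi]].
  - exists M; intros m Hm i Hi HPi.
    destruct (Nat.eq_dec i K) as [->|]; [contradiction | apply HM; [lia|lia|exact HPi]].
Qed.

Lemma strict_incr_ge (phi : nat -> nat) :
  (forall n, (phi n < phi (S n))%nat) -> forall n, (n <= phi n)%nat.
Proof. intros H n; induction n as [|n IH]; [lia | specialize (H n); lia]. Qed.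

Lemma sum_f_R0_split_bound (d w t : nat -> R) (K : nat) (e c eta tau : R) :
  0 <= e -> 0 <= c -> (forall i, 0 <= w i) -> (forall i, 0 <= t i) ->
  (forall i, (i <= K)%nat -> Rabs (d i) <= e * w i) ->
  (forall i, Rabs (d i) <= c * w i + t i) ->
  (forall n, sum_f_R0 w n <= 1) -> 1 - eta <= sum_f_R0 w K ->
  (forall n, sum_f_R0 t n <= tau) ->
  forall n, sum_f_R0 (fun i => Rabs (d i)) n <= e + c * eta + tau.
Proof.
  intros He Hc Hw Ht Hhead Hall Hw1 HwK Htau n.
  assert (Heta : 0 <= eta) by (specialize (Hw1 K); lra).
  assert (Htau0 : 0 <= tau) by (specialize (Htau 0%nat); specialize (Ht 0%nat); simpl in Htau; lra).
  assert (Hhead_sum : forall k, (k <= K)%nat -> sum_f_R0 (fun i => Rabs (d i)) k <= e).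
  { intros k Hk.
    apply Rle_trans with (sum_f_R0 (fun i => w i * e) k).
    - apply sum_Rle; intros i Hi; rewrite Rmult_comm; apply Hhead; lia.
    - rewrite <- scal_sum; specialize (Hw1 k); nra. }
  destruct (Compare_dec.le_lt_dec n K) as [HnK|HKn].
  { specialize (Hhead_sum n HnK); nra. }
  rewrite (tech2 _ K n HKn).
  assert (Hwn := Hw1 n); rewrite (tech2 _ K n HKn) in Hwn.
  assert (Htn := Htau n); rewrite (tech2 _ K n HKn) in Htn.
  assert (HtK := cond_pos_sum _ K Ht).
  assert (Htail : sum_f_R0 (fun i => Rabs (d (S K + i)%nat)) (n - S K)
      <= c * sum_f_R0 (fun i => w (S K + i)%nat) (n - S K)
         + sum_f_R0 (fun i => t (S K + i)%nat) (n - S K)).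
  { rewrite scal_sum, <- plus_sum; apply sum_growing; intros i.
    specialize (Hall (S K + i)%nat); lra. }
  specialize (Hhead_sum K (le_n K)); nra.
Qed.

Lemma Rbar_lub_is_lub (E : Rbar -> Prop) : Rbar_is_lub E (Rbar_lub E).
Proof. unfold Rbar_lub; destruct (Rbar_ex_lub E); assumption. Qed.

Definition seq_compact (D : (nat -> R) -> Prop) : Prop :=
  forall s : nat -> nat -> R, (forall n, D (s n)) ->
    exists (phi : nat -> nat) (th : nat -> R),
      (forall n, (phi n < phi (S n))%nat) /\ D th /\
      forall j, is_lim_seq (fun n => s (phi n) j) (th j).

Section SublinearExpectation.

Variables flo fup : nat -> (nat -> R) -> R.
Local Notation D := (inD flo fup).
Local Notation sE := (sE flo fup).

Lemma inD_nonneg th i : D th -> 0 <= th i.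
Proof. intros [H _]; apply H. Qed.

Lemma inD_sum_le_1 th n : D th -> sum_f_R0 th n <= 1.
Proof.
  intros Hth; apply sum_incr; [exact (proj2 (proj2 Hth)) | intros i; exact (inD_nonneg th i Hth)].
Qed.

Lemma sE_ge th U : D th -> Rbar_le (Etheta th U) (sE U).
Proof. intros Hth; apply (proj1 (Rbar_lub_is_lub _)); exists th; split; auto. Qed.

Lemma sE_le U (y : Rbar) : (forall th, D th -> Rbar_le (Etheta th U) y) -> Rbar_le (sE U) y.
Proof. intros H; apply (proj2 (Rbar_lub_is_lub _)); intros x [th [Hth ->]]; exact (H th Hth). Qed.

Lemma sE_nonneg_Series (Z : nat -> R) (B : R) th :
  (forall i, 0 <= Z i) -> Rbar_le (sE Z) B -> D th ->
  ex_series (fun i => Z i * th i) /\ Series (fun i => Z i * th i) <= B.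
Proof.
  intros HZ HB Hth.
  assert (Hnn : forall i, 0 <= Z i * th i)
    by (intros i; apply Rmult_le_pos; [apply HZ | exact (inD_nonneg th i Hth)]).
  apply Series_nonneg_bounded; [exact Hnn|]; intros n.
  change (Rbar_le (sum_f_R0 (fun i => Z i * th i) n) B).
  eapply Rbar_le_trans; [exact (sum_f_R0_le_Lim_seq _ n Hnn)|].
  exact (Rbar_le_trans _ _ _ (sE_ge th Z Hth) HB).
Qed.

Lemma qs_null_weight (A : nat -> bool) th i :
  sE (indic A) = Finite 0 -> D th -> A i = true -> th i = 0.
Proof.
  intros H0 Hth HAi.
  assert (HA : forall j, 0 <= indic A j) by (intros j; unfold indic; destruct (A j); lra).
  assert (Hnn : forall j, 0 <= indic A j * th j)
    by (intros j; apply Rmult_le_pos; [apply HA | exact (inD_nonneg th j Hth)]).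
  assert (H0le : Rbar_le (sE (indic A)) 0) by (rewrite H0; apply Rbar_le_refl).
  destruct (sE_nonneg_Series (indic A) 0 th HA H0le Hth) as [Hex Hle].
  pose proof (sum_f_R0_le_Series _ i Hnn Hex) as Hi.
  pose proof (inD_nonneg th i Hth).
  assert (Hterm : indic A i * th i <= sum_f_R0 (fun j => indic A j * th j) i).
  { destruct i as [|i]; simpl; [lra | pose proof (cond_pos_sum _ i Hnn); lra]. }
  unfold indic at 1 in Hterm; rewrite HAi in Hterm; lra.
Qed.

Lemma L1_Series_bound (Y : nat -> R) :
  L1 flo fup Y -> exists B : R, forall th, D th ->
    ex_series (fun i => Rabs (Y i) * th i) /\ Series (fun i => Rabs (Y i) * th i) <= B.
Proof.
  unfold L1; intros HY.
  assert (HB : exists B : R, Rbar_le (sE (absf Y)) B).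
  { destruct (sE (absf Y)) as [b| |];
      [exists b; apply Rbar_le_refl | contradiction | exists 0; exact I]. }
  destruct HB as [B HB]; exists B; intros th Hth.
  exact (sE_nonneg_Series (absf Y) B th (fun i => Rabs_pos (Y i)) HB Hth).
Qed.

Lemma L1b_tail_small (Y : nat -> R) :
  L1b flo fup Y -> forall eps, 0 < eps -> exists N : nat,
    Rbar_le (sE (fun i => if Rlt_dec (INR N) (Rabs (Y i)) then Rabs (Y i) else 0)) eps.
Proof.
  intros [_ [Hfin Hlim]] eps Heps.
  destruct (proj2 (is_lim_seq_spec _ _) Hlim (mkposreal eps Heps)) as [N HN].
  exists N; specialize (HN N (le_n N)); simpl in HN.
  rewrite <- (Hfin N); simpl.
  rewrite Rminus_0_r in HN; pose proof (Rle_abs (real (sE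
    (fun i => if Rlt_dec (INR N) (Rabs (Y i)) then Rabs (Y i) else 0)))); lra.
Qed.

Lemma inD_tight : seq_compact D ->
  forall eta, 0 < eta -> exists K, forall th, D th -> 1 - eta <= sum_f_R0 th K.
Proof.
  intros Hcomp eta Heta; apply NNPP; intros Hnot.
  assert (Hbad : forall K, exists th, D th /\ sum_f_R0 th K < 1 - eta).
  { intros K; apply NNPP; intros HK; apply Hnot; exists K; intros th Hth.
    apply Rnot_lt_le; intros Hlt; apply HK; exists th; split; assumption. }
  set (s := fun K => proj1_sig (constructive_indefinite_description _ (Hbad K))).
  assert (Hs : forall K, D (s K) /\ sum_f_R0 (s K) K < 1 - eta)
    by (intros K; exact (proj2_sig (constructive_indefinite_description _ (Hbad K)))).
  destruct (Hcomp s (fun K => proj1 (Hs K))) as (phi & th & Hphi & Hth & Hlim).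
  destruct (proj2 (proj2 Hth) (eta / 2)) as [N0 HN0]; [lra|].
  specialize (HN0 N0 (le_n _)); apply Rabs_def2 in HN0.
  (* The limit point carries mass > 1 - eta/2 on [0..N0]; so, eventually, does [s (phi k)]. *)
  destruct (proj2 (is_lim_seq_spec _ _) (is_lim_seq_sum_f_R0 (fun n => s (phi n)) th Hlim N0)
              (mkposreal (eta / 2) ltac:(lra))) as [k0 Hk0].
  set (k := Nat.max k0 N0).
  specialize (Hk0 k (Nat.le_max_l _ _)); simpl in Hk0; apply Rabs_def2 in Hk0.
  assert (Hphik : (N0 <= phi k)%nat) by (pose proof (strict_incr_ge phi Hphi k); lia).
  destruct (Hs (phi k)) as [HsD Hsmall].
  pose proof (sum_f_R0_nonneg_le _ N0 (phi k) (fun i => inD_nonneg _ i HsD) Hphik).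
  lra.
Qed.

Lemma sE_finite U (u : (nat -> R) -> R) (B : R) :
  (exists th, D th) -> (forall th, D th -> Etheta th U = u th) ->
  (forall th, D th -> Rabs (u th) <= B) -> is_finite (sE U).
Proof.
  intros [th0 H0] HU Hb.
  assert (Hup : Rbar_le (sE U) B).
  { apply sE_le; intros th Hth; rewrite HU by exact Hth.
    pose proof (Hb th Hth); pose proof (Rle_abs (u th)); simpl; lra. }
  assert (Hlow : Rbar_le (- B) (sE U)).
  { apply Rbar_le_trans with (Etheta th0 U); [|exact (sE_ge th0 U H0)].
    rewrite HU by exact H0; pose proof (Hb th0 H0); pose proof (Rle_abs (- u th0)).
    rewrite Rabs_Ropp in *; simpl; lra. }
  destruct (sE U); simpl in *; [reflexivity | contradiction | contradiction].
Qed.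

Lemma sE_le_shift U V (u v : (nat -> R) -> R) (eps : R) :
  is_finite (sE V) -> (forall th, D th -> Etheta th U = u th) ->
  (forall th, D th -> Etheta th V = v th) -> (forall th, D th -> u th <= v th + eps) ->
  Rbar_le (sE U) (real (sE V) + eps).
Proof.
  intros HfV HU HV Huv; apply sE_le; intros th Hth.
  pose proof (sE_ge th V Hth) as HvV; rewrite HV, <- HfV in HvV by exact Hth.
  rewrite HU by exact Hth; pose proof (Huv th Hth); simpl in *; lra.
Qed.

Lemma sE_dist_le U V (u v : (nat -> R) -> R) (eps : R) :
  is_finite (sE U) -> is_finite (sE V) ->
  (forall th, D th -> Etheta th U = u th) -> (forall th, D th -> Etheta th V = v th) ->
  (forall th, D th -> Rabs (u th - v th) <= eps) ->
  Rabs (real (sE U) - real (sE V)) <= eps.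
Proof.
  intros HfU HfV HU HV Huv.
  assert (H1 : Rbar_le (sE U) (real (sE V) + eps)).
  { apply (sE_le_shift U V u v eps HfV HU HV); intros th Hth.
    pose proof (Huv th Hth) as H; apply Rabs_le_between in H; lra. }
  assert (H2 : Rbar_le (sE V) (real (sE U) + eps)).
  { apply (sE_le_shift V U v u eps HfU HV HU); intros th Hth.
    pose proof (Huv th Hth) as H; apply Rabs_le_between in H; lra. }
  rewrite <- HfU in H1; rewrite <- HfV in H2; simpl in H1, H2.
  apply Rabs_le; lra.
Qed.

End SublinearExpectation.

Section DominatedConvergence.

Variables (flo fup : nat -> (nat -> R) -> R) (Xs : nat -> nat -> R) (X Y : nat -> R).
Variables (A : nat -> bool) (B : R).
Local Notation D := (inD flo fup).
Local Notation sE := (sE flo fup).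

Hypothesis Hnull : sE (indic A) = Finite 0.
Hypothesis Hcvg : forall i, A i = false -> is_lim_seq (fun m => Xs m i) (X i).
Hypothesis Hdom : forall m i, Rabs (Xs m i) <= Y i.
Hypothesis HYser : forall th, D th ->
  ex_series (fun i => Rabs (Y i) * th i) /\ Series (fun i => Rabs (Y i) * th i) <= B.
Hypothesis Hne : exists th, D th.
Hypothesis Hcomp : seq_compact D.
Hypothesis Htail : forall eps, 0 < eps -> exists N : nat,
  Rbar_le (sE (fun i => if Rlt_dec (INR N) (Rabs (Y i)) then Rabs (Y i) else 0)) eps.

Lemma weighted_seq_dominated m th i : D th -> Rabs (Xs m i * th i) <= Rabs (Y i) * th i.
Proof.
  intros Hth; pose proof (inD_nonneg flo fup th i Hth).
  rewrite Rabs_mult, (Rabs_pos_eq (th i)) by assumption.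
  apply Rmult_le_compat_r; [assumption|].
  exact (Rle_trans _ _ _ (Hdom m i) (Rle_abs (Y i))).
Qed.

Lemma weighted_limit_dominated th i : D th -> Rabs (X i * th i) <= Rabs (Y i) * th i.
Proof.
  intros Hth; pose proof (inD_nonneg flo fup th i Hth).
  destruct (A i) eqn:HAi.
  { rewrite (qs_null_weight flo fup A th i Hnull Hth HAi), Rmult_0_r, Rabs_R0; lra. }
  rewrite Rabs_mult, (Rabs_pos_eq (th i)) by assumption.
  apply Rmult_le_compat_r; [assumption|].
  change (Rbar_le (Rabs (X i)) (Rabs (Y i))).
  apply (is_lim_seq_le _ _ _ _ (fun m => Rle_trans _ _ _ (Hdom m i) (Rle_abs (Y i)))
           (is_lim_seq_abs _ _ (Hcvg i HAi)) (is_lim_seq_const _)).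
Qed.

Lemma Etheta_dominated U :
  (forall th, D th -> forall i, Rabs (U i * th i) <= Rabs (Y i) * th i) ->
  forall th, D th -> ex_series (fun i => U i * th i) /\
    Etheta th U = Series (fun i => U i * th i) /\ Rabs (Series (fun i => U i * th i)) <= B.
Proof.
  intros HU th Hth; destruct (HYser th Hth) as [HYex HYB].
  destruct (Series_dominated _ _ (HU th Hth) HYex) as [Hex Hle].
  split; [exact Hex|]; split; [exact (Etheta_Series th U Hex) | lra].
Qed.

Lemma sE_dominated_finite U :
  (forall th, D th -> forall i, Rabs (U i * th i) <= Rabs (Y i) * th i) -> is_finite (sE U).
Proof.
  intros HU; apply (sE_finite flo fup U (fun th => Series (fun i => U i * th i)) B Hne);
    intros th Hth; apply (Etheta_dominated U HU th Hth).
Qed.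

Lemma weighted_uniform_cvg : forall eps, 0 < eps -> exists M, forall m, (M <= m)%nat ->
  forall th, D th -> forall n, sum_f_R0 (fun i => Rabs (Xs m i * th i - X i * th i)) n <= eps.
Proof.
  intros eps Heps.
  destruct (Htail (eps / 6)) as [N HN]; [lra|].
  set (T := fun i => if Rlt_dec (INR N) (Rabs (Y i)) then Rabs (Y i) else 0) in HN.
  assert (HT0 : forall i, 0 <= T i)
    by (intros i; unfold T; destruct (Rlt_dec _ _); [apply Rabs_pos | lra]).
  assert (HYT : forall i, Rabs (Y i) <= INR N + T i)
    by (intros i; unfold T; destruct (Rlt_dec _ _); pose proof (pos_INR N); lra).
  set (eta := eps / (6 * (INR N + 1))).
  assert (HN0 := pos_INR N).
  assert (Heta : 0 < eta) by (unfold eta; apply Rdiv_lt_0_compat; lra).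
  assert (Heta2 : 2 * INR N * eta <= eps / 3).
  { unfold eta; apply (Rmult_le_reg_r (6 * (INR N + 1))); [lra|].
    field_simplify; [nra | lra]. }
  destruct (inD_tight flo fup Hcomp eta Heta) as [K HK].
  destruct (is_lim_seq_uniform_finite (fun i => A i = false) Xs X Hcvg (eps / 3) ltac:(lra) (S K))
    as [M HM].
  exists M; intros m Hm th Hth n.
  assert (Hth0 := fun i => inD_nonneg flo fup th i Hth).
  assert (HTser : forall n, sum_f_R0 (fun i => T i * th i * 2) n <= eps / 3).
  { intros k; rewrite <- (scal_sum (fun i => T i * th i)).
    destruct (sE_nonneg_Series flo fup T (eps / 6) th HT0 HN Hth) as [Hex Hle].
    pose proof (sum_f_R0_le_Series _ k (fun i => Rmult_le_pos _ _ (HT0 i) (Hth0 i)) Hex); lra. }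
  apply Rle_trans with (eps / 3 + 2 * INR N * eta + eps / 3); [|lra].
  apply (sum_f_R0_split_bound _ th (fun i => T i * th i * 2) K);
    [lra | lra | exact Hth0 | intros i; pose proof (Rmult_le_pos _ _ (HT0 i) (Hth0 i)); lra
    | | | intros k; exact (inD_sum_le_1 flo fup th k Hth) | exact (HK th Hth) | exact HTser].
  - intros i Hi; rewrite <- Rmult_minus_distr_r, Rabs_mult, (Rabs_pos_eq (th i)) by apply Hth0.
    destruct (A i) eqn:HAi.
    + rewrite (qs_null_weight flo fup A th i Hnull Hth HAi); lra.
    + pose proof (HM m Hm i ltac:(lia) HAi); pose proof (Hth0 i); nra.
  - intros i; unfold Rminus.
    pose proof (Rabs_triang (Xs m i * th i) (- (X i * th i))); rewrite Rabs_Ropp in *.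
    pose proof (weighted_seq_dominated m th i Hth); pose proof (weighted_limit_dominated th i Hth).
    pose proof (Rmult_le_compat_r (th i) _ _ (Hth0 i) (HYT i)); lra.
Qed.

Lemma sE_uniform_cvg : forall eps, 0 < eps -> exists M, forall m, (M <= m)%nat ->
  Rabs (real (sE (Xs m)) - real (sE X)) <= eps.
Proof.
  intros eps Heps; destruct (weighted_uniform_cvg eps Heps) as [M HM]; exists M; intros m Hm.
  assert (HXs := Etheta_dominated (Xs m) (fun th Hth i => weighted_seq_dominated m th i Hth)).
  assert (HX := Etheta_dominated X (fun th Hth i => weighted_limit_dominated th i Hth)).
  apply (sE_dist_le flo fup (Xs m) X (fun th => Series (fun i => Xs m i * th i))
           (fun th => Series (fun i => X i * th i)));
    [ apply sE_dominated_finite; intros th Hth i; exact (weighted_seq_dominated m th i Hth)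
    | apply sE_dominated_finite; intros th Hth i; exact (weighted_limit_dominated th i Hth)
    | intros th Hth; apply (HXs th Hth) | intros th Hth; apply (HX th Hth) | ].
  intros th Hth; apply Series_dist_le;
    [apply (HXs th Hth) | apply (HX th Hth) | exact (HM m Hm th Hth)].
Qed.

End DominatedConvergence.

Theorem mainTheorem8 (flo fup : nat -> (nat -> R) -> R) (c : nat -> R)
  (Hsetup : setup flo fup c)
  (Xs : nat -> nat -> R) (X Y : nat -> R)
  (Hconv : qs flo fup (fun i => is_lim_seq (fun m => Xs m i) (X i)))
  (HYnn : forall i, 0 <= Y i)
  (HY : L1b flo fup Y)
  (Hdom : forall m i, Rabs (Xs m i) <= Y i) :
  is_finite (sE flo fup X) /\ (forall m, is_finite (sE flo fup (Xs m))) /\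
  is_lim_seq (fun m => real (sE flo fup (Xs m))) (sE flo fup X).
Proof.
  destruct Hsetup as (_ & _ & _ & _ & _ & _ & Hne & _ & Hcomp).
  destruct Hconv as [A [Hnull Hcvg]].
  destruct (L1_Series_bound flo fup Y (proj1 HY)) as [B HYser].
  pose proof (L1b_tail_small flo fup Y HY) as Htail.
  assert (HfX : is_finite (sE flo fup X)).
  { apply (sE_dominated_finite flo fup Y B HYser Hne); intros th Hth i.
    exact (weighted_limit_dominated flo fup Xs X Y A Hnull Hcvg Hdom th i Hth). }
  split; [exact HfX|]; split.
  { intros m; apply (sE_dominated_finite flo fup Y B HYser Hne); intros th Hth i.
    exact (weighted_seq_dominated flo fup Xs Y Hdom m th i Hth). }
  rewrite <- HfX; apply is_lim_seq_spec; intros [eps Heps].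
  destruct (sE_uniform_cvg flo fup Xs X Y A B Hnull Hcvg Hdom HYser Hne Hcomp Htail (eps / 2))
    as [M HM]; [lra|].
  exists M; intros m Hm; specialize (HM m Hm); simpl; lra.
Qed.
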